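(* Let $m,n\ge 0$ be integers with $m-n\equiv 1\pmod 2$, put $N=m+n$ and $k=\frac{N-1}{2}$. Let $1\le p,q,r<\infty$ satisfy $\frac1r=\frac1p+\frac1q-1$. Then $$\left(\frac{2}{r+1}+\binom{N}{k}^r+\sum_{\substack{j=0\\ j\ne k}}^{N-1}\frac{\binom{N}{j+1}^{r+1}-\binom{N}{j}^{r+1}}{(r+1)\left[\binom{N}{j+1}-\binom{N}{j}\right]}\right)^{1/r} \le \Big(\sum_{j=0}^{m}\binom{m}{j}^q\Big)^{1/q}\Big(\sum_{j=0}^{n}\binom{n}{j}^p\Big)^{1/p}.$$
   Context: Binomial coefficients have their usual meaning. *)

From Stdlib Require Export Reals ZArith.
Open Scope R_scope.

Definition binom_power_sum (n : nat) (s : R) : R :=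
  sum_f_R0 (fun j => Rpower (C n j) s) n.

Definition lhs_term (N k : nat) (r : R) (j : nat) : R :=
  if Nat.eqb j k then 0
  else (Rpower (C N (S j)) (r + 1) - Rpower (C N j) (r + 1)) /
       ((r + 1) * (C N (S j) - C N j)).

(* sum_{j=0, j<>k}^{N-1} ... ; requires N >= 1 (true since N is odd). *)
Definition lhs_sum (N k : nat) (r : R) : R :=
  sum_f_R0 (lhs_term N k r) (N - 1).

(* On each interval between C(N,j) and C(N,j+1) the mean value of x^r is at
   most the average of its endpoint values, by convexity of x^r.  For j = k the
   two endpoints coincide, since C(N,k) = C(N,k+1) for N = 2k+1, and the end
   values C(N,0)^r = C(N,N)^r = 1 absorb 2/(r+1); so the bracket is at most
   sum_l C(N,l)^r.  By Vandermonde's identity the row C(N,.) is the convolution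
   of the rows C(m,.) and C(n,.), and Young's convolution inequality
   |a * b|_r <= |a|_q |b|_p, proved through a three-term weighted AM-GM
   inequality, bounds that sum by the right-hand side. *)

From Stdlib Require Import Reals ZArith Lra Lia Psatz.
From mathcomp Require ssreflect ssrbool eqtype ssrnat fintype bigop binomial.
Open Scope R_scope.

Definition conv (a b : nat -> R) (l : nat) : R :=
  sum_f_R0 (fun i => a i * b (l - i)%nat) l.

Module BinomialRow.
Import ssreflect ssrbool eqtype ssrnat fintype bigop binomial.

(* Unlike Stdlib's [C n k], this vanishes for [k > n]. *)
Definition binomR (n k : nat) : R := INR 'C(n, k).

Lemma fact_factorial n : Factorial.fact n = n`!.
Proof. by elim: n => //= n IH; rewrite factS -IH. Qed.

Lemma C_binomR n k : (k <= n)%coq_nat -> C n k = binomR n k.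
Proof.
move=> /leP le_kn; rewrite /C /binomR !fact_factorial -(bin_fact le_kn).
rewrite -!multE !mult_INR -minusE; field.
by split; apply: not_0_INR; apply/eqP; rewrite -lt0n fact_gt0.
Qed.

Lemma binomR_pos n k : (k <= n)%coq_nat -> 0 < binomR n k.
Proof. by move=> /leP le_kn; apply: lt_0_INR; apply/ltP; rewrite bin_gt0. Qed.

Lemma binomR_small n k : (n < k)%coq_nat -> binomR n k = 0.
Proof. by move=> /ltP lt_nk; rewrite /binomR bin_small. Qed.

Lemma INR_sum_ord (F : nat -> nat) l :
  INR (\sum_(i < l.+1) F i) = sum_f_R0 (fun i => INR (F i)) l.
Proof.
elim: l => [|l IH]; first by rewrite big_ord_recr big_ord0.
by rewrite big_ord_recr /= plus_INR IH.
Qed.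

Lemma binomR_Vandermonde m n l : binomR (m + n) l = conv (binomR m) (binomR n) l.
Proof.
rewrite /binomR -Vandermonde (INR_sum_ord (fun j => 'C(m, j) * 'C(n, l - j))%N) /conv.
apply: PartSum.sum_eq => i _; by rewrite -multE mult_INR -minusE.
Qed.

End BinomialRow.
Import BinomialRow.

Lemma sum_term_le f L i :
  (forall j, 0 <= f j) -> (i <= L)%nat -> f i <= sum_f_R0 f L.
Proof.
  intros f_nonneg. induction L as [|L IH]; intros Hi; simpl.
  - replace i with 0%nat by lia. lra.
  - destruct (Nat.eq_dec i (S L)) as [->|Hne].
    + pose proof (cond_pos_sum f L f_nonneg). lra.
    + pose proof (IH ltac:(lia)). pose proof (f_nonneg (S L)). lra.
Qed.

Lemma sum_prefix_le f L M :
  (forall j, 0 <= f j) -> (L <= M)%nat -> sum_f_R0 f L <= sum_f_R0 f M.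
Proof.
  intros f_nonneg HLM. induction HLM as [|M _ IH]; [lra|].
  simpl. pose proof (f_nonneg (S M)). lra.
Qed.

Lemma sum_tail_zero f M L :
  (forall j, (M < j)%nat -> f j = 0) -> (M <= L)%nat -> sum_f_R0 f L = sum_f_R0 f M.
Proof.
  intros f_zero HML. induction HML as [|L HML IH]; [reflexivity|].
  simpl. rewrite IH, f_zero by lia. ring.
Qed.

Lemma sum_reflect g l : sum_f_R0 (fun i => g (l - i)%nat) l = sum_f_R0 g l.
Proof.
  revert g. induction l as [|l IH]; intros g; [reflexivity|].
  rewrite decomp_sum by lia. simpl pred.
  change (fun i => g (S l - S i)%nat) with (fun i => g (l - i)%nat).
  rewrite IH, tech5, Nat.sub_0_r. ring.
Qed.

Lemma sum_consecutive_means f L :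
  sum_f_R0 (fun j => (f j + f (S j)) / 2) L
  = sum_f_R0 f (S L) - (f 0%nat + f (S L)) / 2.
Proof.
  induction L as [|L IH]; simpl; [field|].
  rewrite IH. simpl. field.
Qed.

Lemma sum_indicator x k L :
  sum_f_R0 (fun j => if Nat.eqb j k then x else 0) L = if Nat.leb k L then x else 0.
Proof.
  induction L as [|L IH].
  - destruct k; reflexivity.
  - rewrite tech5, IH. destruct (Nat.leb_spec k L), (Nat.eqb_spec (S L) k),
      (Nat.leb_spec k (S L)); try lia; ring.
Qed.

Lemma sum_conv_le_mul f g N :
  (forall i, 0 <= f i) -> (forall j, 0 <= g j) ->
  sum_f_R0 (conv f g) N <= sum_f_R0 f N * sum_f_R0 g N.
Proof.
  intros f_nonneg g_nonneg. destruct N as [|N].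
  - unfold conv. simpl. lra.
  - rewrite cauchy_finite by lia. unfold conv.
    assert (0 <= sum_f_R0 (fun k => sum_f_R0 (fun l => f (S (l + k)) * g (S N - l)%nat)
                                       (pred (S N - k))) (pred (S N))).
    { apply cond_pos_sum; intro; apply cond_pos_sum; intro.
      apply Rmult_le_pos; auto. }
    lra.
Qed.

Lemma Rdiv_le_1 x y : 0 < y -> x <= y -> x / y <= 1.
Proof.
  intros Hy Hxy. apply (Rmult_le_reg_r y); [exact Hy|].
  unfold Rdiv. rewrite Rmult_assoc, Rinv_l; lra.
Qed.

Lemma one_div_bounds x : 1 <= x -> 0 < 1 / x <= 1.
Proof.
  intros Hx. split; [apply Rdiv_lt_0_compat | apply Rdiv_le_1]; lra.
Qed.

Lemma exp_tangent_le M X : exp M * (1 + (X - M)) <= exp X.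
Proof.
  replace (exp X) with (exp M * exp (X - M)) by (rewrite <- exp_plus; f_equal; ring).
  apply Rmult_le_compat_l; [left; apply exp_pos | apply exp_ineq1_le].
Qed.

Lemma exp_convex3 al be ga X Y Z :
  0 <= al -> 0 <= be -> 0 <= ga -> al + be + ga = 1 ->
  exp (al * X + be * Y + ga * Z) <= al * exp X + be * exp Y + ga * exp Z.
Proof.
  intros Hal Hbe Hga Hsum. set (M := al * X + be * Y + ga * Z).
  pose proof (exp_tangent_le M X) as HX.
  pose proof (exp_tangent_le M Y) as HY.
  pose proof (exp_tangent_le M Z) as HZ.
  assert (E : al * (exp M * (1 + (X - M))) + be * (exp M * (1 + (Y - M)))
              + ga * (exp M * (1 + (Z - M)))
              = exp M * ((al + be + ga) * (1 - M) + M)) by (unfold M; ring).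
  rewrite Hsum, Rmult_1_l in E. replace (1 - M + M) with 1 in E by ring.
  nra.
Qed.

Lemma Rpower_bernoulli t r : 0 < t -> 1 <= r -> 1 + r * (t - 1) <= Rpower t r.
Proof.
  intros Ht Hr. destruct (one_div_bounds r Hr) as [Hr0 Hr1].
  pose proof (exp_convex3 (1 / r) (1 - 1 / r) 0 (r * ln t) 0 0
                ltac:(lra) ltac:(lra) ltac:(lra) ltac:(lra)) as H.
  replace (1 / r * (r * ln t) + (1 - 1 / r) * 0 + 0 * 0) with (ln t) in H
    by (field; lra).
  rewrite exp_ln, exp_0 in H by exact Ht. fold (Rpower t r) in H.
  apply (Rmult_le_compat_l r) in H; [|lra].
  replace (r * (1 / r * Rpower t r + (1 - 1 / r) * 1 + 0 * 1))
    with (Rpower t r + r - 1) in H by (field; lra).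
  lra.
Qed.

Lemma Rpower_tangent_le a x r : 0 < a -> 0 < x -> 1 <= r ->
  Rpower x r + r * Rpower x (r - 1) * (a - x) <= Rpower a r.
Proof.
  intros Ha Hx Hr.
  pose proof (Rpower_bernoulli (a / x) r ltac:(apply Rdiv_lt_0_compat; auto) Hr) as H.
  assert (Hax : Rpower (a / x) r * Rpower x r = Rpower a r).
  { rewrite Rpower_mult_distr by (try apply Rdiv_lt_0_compat; auto).
    f_equal. field. lra. }
  assert (Hxr : Rpower x r = Rpower x (r - 1) * x).
  { rewrite <- (Rpower_1 x) at 3 by exact Hx. rewrite <- Rpower_plus. f_equal. ring. }
  assert (0 < Rpower x r) by apply exp_pos.
  apply (Rmult_le_compat_l (Rpower x r)) in H; [|lra].
  rewrite Rmult_comm in Hax.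
  replace (Rpower x r * (1 + r * (a / x - 1)))
    with (Rpower x r + r * Rpower x (r - 1) * (a - x)) in H
    by (rewrite Hxr; field; lra).
  lra.
Qed.

Section Trapezoid.
Variables (a r : R).
Hypotheses (Ha : 0 < a) (Hr : 1 <= r).

(* [gap b - gap a] is [r + 1] times the error of the trapezoid rule for
   [x ^ r] on [a, b]. *)
Let gap x := (Rpower a r + Rpower x r) * (x - a) * ((r + 1) / 2) - Rpower x (r + 1).
Let gap' x := (r * Rpower x (r - 1) * (x - a) + (Rpower a r + Rpower x r)) * ((r + 1) / 2)
              - (r + 1) * Rpower x r.

Lemma trapezoid_gap_derivative x : 0 < x -> derivable_pt_lim gap x (gap' x).
Proof.
  intros Hx.
  assert (D1 : derivable_pt_lim (fun y => Rpower a r + Rpower y r) x (0 + r * Rpower x (r - 1))).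
  { apply (derivable_pt_lim_plus (fun _ => Rpower a r) (fun y => Rpower y r)).
    - apply derivable_pt_lim_const.
    - apply derivable_pt_lim_power, Hx. }
  assert (D2 : derivable_pt_lim (fun y => y - a) x (1 - 0)).
  { apply (derivable_pt_lim_minus (fun y => y) (fun _ => a)).
    - apply derivable_pt_lim_id.
    - apply derivable_pt_lim_const. }
  pose proof (derivable_pt_lim_mult _ _ _ _ _
    (derivable_pt_lim_mult _ _ _ _ _ D1 D2) (derivable_pt_lim_const ((r + 1) / 2) x)) as D3.
  pose proof (derivable_pt_lim_minus _ _ _ _ _ D3 (derivable_pt_lim_power x (r + 1) Hx)) as D.
  match type of D with derivable_pt_lim _ _ ?l => replace (gap' x) with l end.
  - exact D.
  - unfold gap', mult_fct, fct_cte. replace (r + 1 - 1) with r by ring. ring.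
Qed.

(* A positive multiple of the gap at [a] between [x ^ r] and its tangent at [x]. *)
Lemma trapezoid_gap_derivative_nonneg x : 0 < x -> 0 <= gap' x.
Proof.
  intros Hx. pose proof (Rpower_tangent_le a x r Ha Hx Hr).
  replace (gap' x) with ((r + 1) / 2 * (Rpower a r
                         - (Rpower x r + r * Rpower x (r - 1) * (a - x))))
    by (unfold gap'; field).
  apply Rmult_le_pos; lra.
Qed.

Lemma trapezoid_Rpower b : a < b ->
  Rpower b (r + 1) - Rpower a (r + 1) <= (r + 1) * (b - a) * ((Rpower a r + Rpower b r) / 2).
Proof.
  intros Hab.
  destruct (MVT_cor2 gap gap' a b Hab) as [c [Hc Hac]].
  { intros c Hc. apply trapezoid_gap_derivative. lra. }
  pose proof (trapezoid_gap_derivative_nonneg c ltac:(lra)).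
  assert (0 <= gap b - gap a) by (rewrite Hc; nra).
  unfold gap in *. lra.
Qed.

End Trapezoid.

Lemma Rdiv_sub_swap x y c u v : (x - y) / (c * (u - v)) = (y - x) / (c * (v - u)).
Proof.
  replace (y - x) with (- (x - y)) by ring.
  replace (c * (v - u)) with (- (c * (u - v))) by ring.
  unfold Rdiv. rewrite Rinv_opp. ring.
Qed.

(* The quotient is the mean value of [x ^ r] on [a, b], or [0] when [a = b]
   (division by zero). *)
Lemma Rpower_mean_bounds a b r : 0 < a -> 0 < b -> 1 <= r ->
  0 <= (Rpower b (r + 1) - Rpower a (r + 1)) / ((r + 1) * (b - a))
    <= (Rpower a r + Rpower b r) / 2.
Proof.
  intros Ha Hb Hr.
  assert (ordered : forall u v, 0 < u < v ->
    0 <= (Rpower v (r + 1) - Rpower u (r + 1)) / ((r + 1) * (v - u))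
      <= (Rpower u r + Rpower v r) / 2).
  { intros u v Huv. pose proof (trapezoid_Rpower u r ltac:(lra) Hr v ltac:(lra)).
    pose proof (Rlt_Rpower_l u v (r + 1) ltac:(lra) Huv).
    assert (0 < (r + 1) * (v - u)) by (apply Rmult_lt_0_compat; lra).
    split.
    - apply Rle_mult_inv_pos; lra.
    - apply (Rmult_le_reg_r ((r + 1) * (v - u))); [lra|].
      unfold Rdiv at 1. rewrite Rmult_assoc, Rinv_l, Rmult_1_r by lra. lra. }
  pose proof (exp_pos (r * ln a)). pose proof (exp_pos (r * ln b)).
  destruct (Rtotal_order a b) as [Hab|[<-|Hab]].
  - apply ordered; lra.
  - replace ((r + 1) * (a - a)) with 0 by ring. unfold Rdiv at 1. rewrite Rinv_0.
    unfold Rpower. lra.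
  - rewrite Rdiv_sub_swap, (Rplus_comm (Rpower a r)). apply ordered; lra.
Qed.

Lemma C_pos n k : 0 < C n k.
Proof.
  unfold C. apply Rdiv_lt_0_compat; [|apply Rmult_lt_0_compat]; apply INR_fact_lt_0.
Qed.

Lemma C_n_0 n : C n 0 = 1.
Proof. unfold C. rewrite Nat.sub_0_r. simpl. field. apply INR_fact_neq_0. Qed.

Lemma C_n_n n : C n n = 1.
Proof. unfold C. rewrite Nat.sub_diag. simpl. field. apply INR_fact_neq_0. Qed.

Lemma C_middle k : C (S (2 * k)) k = C (S (2 * k)) (S k).
Proof. rewrite pascal_step1 by lia. f_equal. lia. Qed.

Lemma lhs_term_nonneg N k r j : 1 <= r -> 0 <= lhs_term N k r j.
Proof.
  intros Hr. unfold lhs_term. destruct (Nat.eqb j k); [lra|].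
  apply Rpower_mean_bounds; auto using C_pos.
Qed.

Lemma lhs_pos N k r : 1 <= r -> 0 < 2 / (r + 1) + Rpower (C N k) r + lhs_sum N k r.
Proof.
  intros Hr.
  assert (0 < 2 / (r + 1)) by (apply Rdiv_lt_0_compat; lra).
  pose proof (exp_pos (r * ln (C N k))).
  assert (0 <= lhs_sum N k r) by (apply cond_pos_sum; intro; apply lhs_term_nonneg, Hr).
  unfold Rpower. lra.
Qed.

Lemma lhs_le_sum_Rpower_C N k r : N = S (2 * k) -> 1 <= r ->
  2 / (r + 1) + Rpower (C N k) r + lhs_sum N k r <= sum_f_R0 (fun l => Rpower (C N l) r) N.
Proof.
  intros HN Hr. set (f l := Rpower (C N l) r).
  assert (Hmid : f k = f (S k)) by (unfold f; rewrite HN, C_middle; reflexivity).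
  assert (Hterm : forall j, lhs_term N k r j + (if Nat.eqb j k then f k else 0)
                            <= (f j + f (S j)) / 2).
  { intros j. unfold lhs_term. destruct (Nat.eqb_spec j k) as [->|_].
    - rewrite <- Hmid. lra.
    - rewrite Rplus_0_r. apply Rpower_mean_bounds; auto using C_pos. }
  pose proof (sum_Rle _ _ (N - 1) (fun j _ => Hterm j)) as Hsum.
  rewrite plus_sum, sum_consecutive_means, sum_indicator in Hsum.
  replace (S (N - 1)) with N in Hsum by lia.
  replace (Nat.leb k (N - 1)) with true in Hsum by (symmetry; apply Nat.leb_le; lia).
  assert (f 0%nat = 1) by (unfold f, Rpower; rewrite C_n_0, ln_1, Rmult_0_r; apply exp_0).
  assert (f N = 1) by (unfold f, Rpower; rewrite C_n_n, ln_1, Rmult_0_r; apply exp_0).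
  assert (2 / (r + 1) <= 1) by (apply Rdiv_le_1; lra).
  unfold lhs_sum. fold (f k). lra.
Qed.

(* [Rpower 0 s = 1] is a junk value; [rpow] is the power of a nonnegative
   base with [rpow 0 s = 0]. *)
Definition rpow (x s : R) : R := if Rlt_dec 0 x then Rpower x s else 0.

Lemma rpow_of_pos x s : 0 < x -> rpow x s = Rpower x s.
Proof. intros Hx. unfold rpow. destruct (Rlt_dec 0 x); [reflexivity | lra]. Qed.

Lemma rpow_nonneg x s : 0 <= rpow x s.
Proof. unfold rpow. destruct (Rlt_dec 0 x); [left; apply exp_pos | lra]. Qed.

Lemma rpow_pos x s : 0 < x -> 0 < rpow x s.
Proof. intros Hx. rewrite rpow_of_pos by exact Hx. apply exp_pos. Qed.

Lemma rpow_0 s : rpow 0 s = 0.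
Proof. unfold rpow. destruct (Rlt_dec 0 0); [lra | reflexivity]. Qed.

(* Writing [x y] as [K] times the weighted geometric mean of
   [x^s y^t / T], [x^s / A] and [y^t / B], then applying weighted AM-GM. *)
Lemma mul_le_weighted_mean x y s t T A B al be ga :
  0 <= x -> 0 <= y -> 0 < T -> 0 < A -> 0 < B ->
  0 <= al -> 0 <= be -> 0 <= ga -> al + be + ga = 1 ->
  al * s + be * s = 1 -> al * t + ga * t = 1 ->
  let K := exp (al * ln T + be * ln A + ga * ln B) in
  x * y <= rpow x s * rpow y t * (K * al / T) + rpow x s * (K * be / A)
           + rpow y t * (K * ga / B).
Proof.
  intros Hx Hy HT HA HB Hal Hbe Hga Hsum Hs Ht K.
  assert (HK : 0 < K) by apply exp_pos.
  destruct (Rlt_dec 0 x), (Rlt_dec 0 y).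
  - rewrite !rpow_of_pos by assumption. unfold Rpower.
    set (X := ln x). set (Y := ln y).
    set (P := s * X + t * Y - ln T). set (Q := s * X - ln A). set (R := t * Y - ln B).
    assert (Hxy : x * y = K * exp (al * P + be * Q + ga * R)).
    { replace (al * P + be * Q + ga * R)
        with ((al * s + be * s) * X + (al * t + ga * t) * Y
              - (al * ln T + be * ln A + ga * ln B)) by (unfold P, Q, R; ring).
      rewrite Hs, Ht. unfold K. rewrite <- exp_plus, Rmult_1_l, Rmult_1_l.
      replace (al * ln T + be * ln A + ga * ln B + (X + Y - (al * ln T + be * ln A + ga * ln B)))
        with (X + Y) by ring.
      unfold X, Y. rewrite exp_plus, !exp_ln by assumption. reflexivity. }
    assert (EP : exp P = exp (s * X) * exp (t * Y) / T)
      by (unfold P, Rminus; rewrite !exp_plus, exp_Ropp, exp_ln by exact HT; field; lra).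
    assert (EQ : exp Q = exp (s * X) / A)
      by (unfold Q, Rminus; rewrite exp_plus, exp_Ropp, exp_ln by exact HA; field; lra).
    assert (ER : exp R = exp (t * Y) / B)
      by (unfold R, Rminus; rewrite exp_plus, exp_Ropp, exp_ln by exact HB; field; lra).
    rewrite Hxy.
    apply Rle_trans with (K * (al * exp P + be * exp Q + ga * exp R)).
    + apply Rmult_le_compat_l; [lra | apply exp_convex3; assumption].
    + right. rewrite EP, EQ, ER. field. lra.
  all: assert (Hxy : x * y = 0) by (assert (x = 0 \/ y = 0) as [-> | ->] by lra; ring).
  all: rewrite Hxy; pose proof (rpow_nonneg x s); pose proof (rpow_nonneg y t).
  all: assert (0 <= K * al / T) by (apply Rle_mult_inv_pos; [apply Rmult_le_pos|]; lra).
  all: assert (0 <= K * be / A) by (apply Rle_mult_inv_pos; [apply Rmult_le_pos|]; lra).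
  all: assert (0 <= K * ga / B) by (apply Rle_mult_inv_pos; [apply Rmult_le_pos|]; lra).
  all: apply Rplus_le_le_0_compat; [apply Rplus_le_le_0_compat|];
    apply Rmult_le_pos; auto; apply Rmult_le_pos; auto.
Qed.

Section DiscreteYoung.
Variables (a b : nat -> R) (m n : nat) (p q r : R).
Hypotheses (a_nonneg : forall i, 0 <= a i) (b_nonneg : forall j, 0 <= b j).
(* Positivity on [0, m] and [0, n] only keeps the quantities whose logarithms
   are taken below away from [0]. *)
Hypotheses (a_pos : forall i, (i <= m)%nat -> 0 < a i) (b_pos : forall j, (j <= n)%nat -> 0 < b j).
Hypotheses (Hp : 1 <= p) (Hq : 1 <= q) (Hr : 0 < r) (Hpqr : 1 / r = 1 / p + 1 / q - 1).

Let U i := rpow (a i) q.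
Let V j := rpow (b j) p.
Let A := sum_f_R0 U (m + n).
Let B := sum_f_R0 V (m + n).
Let T := conv U V.
Let be := 1 / q - 1 / r.
Let ga := 1 / p - 1 / r.

Lemma young_weights : 0 < 1 / r /\ 0 <= be /\ 0 <= ga /\ 1 / r + be + ga = 1 /\
  1 / r * q + be * q = 1 /\ 1 / r * p + ga * p = 1.
Proof.
  pose proof (one_div_bounds p Hp). pose proof (one_div_bounds q Hq).
  assert (0 < 1 / r) by (apply Rdiv_lt_0_compat; lra).
  unfold be, ga. rewrite Hpqr. repeat split; try lra.
  - replace ((1 / p + 1 / q - 1) * q + (1 / q - (1 / p + 1 / q - 1)) * q) with (1 / q * q)
      by ring. field. lra.
  - replace ((1 / p + 1 / q - 1) * p + (1 / p - (1 / p + 1 / q - 1)) * p) with (1 / p * p)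
      by ring. field. lra.
Qed.

Lemma young_A_pos : 0 < A.
Proof.
  eapply Rlt_le_trans; [|apply (sum_term_le U _ 0); [intro; apply rpow_nonneg | lia]].
  apply rpow_pos, a_pos. lia.
Qed.

Lemma young_B_pos : 0 < B.
Proof.
  eapply Rlt_le_trans; [|apply (sum_term_le V _ 0); [intro; apply rpow_nonneg | lia]].
  apply rpow_pos, b_pos. lia.
Qed.

Lemma young_T_pos l : (l <= m + n)%nat -> 0 < T l.
Proof.
  intros Hl. set (i := Nat.min l m).
  eapply Rlt_le_trans; [|apply (sum_term_le _ l i);
    [intro; apply Rmult_le_pos; apply rpow_nonneg | unfold i; lia]].
  apply Rmult_lt_0_compat; apply rpow_pos; [apply a_pos | apply b_pos]; unfold i; lia.
Qed.

Lemma conv_le_exp l : (l <= m + n)%nat ->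
  conv a b l <= exp (1 / r * ln (T l) + be * ln A + ga * ln B).
Proof.
  intros Hl. destruct young_weights as (Hal & Hbe & Hga & Hsum & Hwq & Hwp).
  pose proof (young_T_pos l Hl) as HT. pose proof young_A_pos. pose proof young_B_pos.
  set (K := exp (1 / r * ln (T l) + be * ln A + ga * ln B)).
  assert (HK : 0 < K) by apply exp_pos.
  unfold conv at 1. eapply Rle_trans.
  { apply sum_Rle. intros i _.
    apply (mul_le_weighted_mean (a i) (b (l - i)%nat) q p (T l) A B (1 / r) be ga);
      auto; lra. }
  fold K. rewrite !plus_sum, <- !scal_sum.
  change (sum_f_R0 (fun i => rpow (a i) q * rpow (b (l - i)%nat) p) l) with (T l).
  change (sum_f_R0 (fun i => rpow (a i) q) l) with (sum_f_R0 U l).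
  rewrite (sum_reflect (fun j => rpow (b j) p) l).
  change (sum_f_R0 (fun j => rpow (b j) p) l) with (sum_f_R0 V l).
  assert (HUl : sum_f_R0 U l / A <= 1).
  { apply Rdiv_le_1; [lra|]. apply sum_prefix_le; [intro; apply rpow_nonneg | exact Hl]. }
  assert (HVl : sum_f_R0 V l / B <= 1).
  { apply Rdiv_le_1; [lra|]. apply sum_prefix_le; [intro; apply rpow_nonneg | lia]. }
  replace (K * (1 / r) / T l * T l + K * be / A * sum_f_R0 U l + K * ga / B * sum_f_R0 V l)
    with (K * (1 / r) + K * be * (sum_f_R0 U l / A) + K * ga * (sum_f_R0 V l / B))
    by (field; lra).
  pose proof (Rmult_le_pos (K * be) (1 - sum_f_R0 U l / A) ltac:(nra) ltac:(lra)).
  pose proof (Rmult_le_pos (K * ga) (1 - sum_f_R0 V l / B) ltac:(nra) ltac:(lra)).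
  nra.
Qed.

Lemma rpow_conv_le l : (l <= m + n)%nat ->
  rpow (conv a b l) r <= T l * exp (r * be * ln A + r * ga * ln B).
Proof.
  intros Hl. pose proof (young_T_pos l Hl) as HT.
  pose proof (exp_pos (r * be * ln A + r * ga * ln B)).
  unfold rpow. destruct (Rlt_dec 0 (conv a b l)) as [Hc|_]; [|nra].
  eapply Rle_trans.
  { apply Rle_Rpower_l; [lra|]. split; [exact Hc | exact (conv_le_exp l Hl)]. }
  unfold Rpower. rewrite ln_exp.
  replace (r * (1 / r * ln (T l) + be * ln A + ga * ln B))
    with (ln (T l) + (r * be * ln A + r * ga * ln B)) by (field; lra).
  rewrite exp_plus, exp_ln by exact HT. lra.
Qed.

Lemma young_conv_inequality :
  Rpower (sum_f_R0 (fun l => rpow (conv a b l) r) (m + n)) (1 / r)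
  <= Rpower A (1 / q) * Rpower B (1 / p).
Proof.
  pose proof young_A_pos as HA. pose proof young_B_pos as HB.
  set (E := exp (r * be * ln A + r * ga * ln B)).
  assert (HE : 0 < E) by apply exp_pos.
  assert (Hpos : 0 < sum_f_R0 (fun l => rpow (conv a b l) r) (m + n)).
  { eapply Rlt_le_trans; [|apply (sum_term_le _ _ 0); [intro; apply rpow_nonneg | lia]].
    apply rpow_pos. unfold conv. simpl.
    apply Rmult_lt_0_compat; [apply a_pos | apply b_pos]; lia. }
  assert (Hsum : sum_f_R0 (fun l => rpow (conv a b l) r) (m + n) <= A * B * E).
  { eapply Rle_trans; [apply sum_Rle; intros l Hl; exact (rpow_conv_le l Hl)|].
    rewrite <- scal_sum, Rmult_comm. apply Rmult_le_compat_r; [lra|].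
    apply sum_conv_le_mul; intro; apply rpow_nonneg. }
  eapply Rle_trans; [apply Rle_Rpower_l; [left; apply Rdiv_lt_0_compat; lra | split; eassumption]|].
  right. unfold Rpower, E.
  rewrite !ln_mult, ln_exp by (try apply Rmult_lt_0_compat; try apply exp_pos; assumption).
  rewrite <- exp_plus. f_equal. unfold be, ga. field. lra.
Qed.

End DiscreteYoung.

Lemma odd_sum_of_odd_difference m n :
  Z.modulo (Z.of_nat m - Z.of_nat n) 2 = 1%Z -> (m + n = S (2 * ((m + n - 1) / 2)))%nat.
Proof.
  intros Hmn. destruct (Nat.Even_or_Odd (m + n)) as [[t Ht]|[t Ht]].
  - pose proof (Z.div_mod (Z.of_nat m - Z.of_nat n) 2 ltac:(lia)). lia.
  - rewrite Ht. replace (2 * t + 1 - 1)%nat with (t * 2)%nat by lia.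
    rewrite Nat.div_mul; lia.
Qed.

Lemma binom_power_sum_eq m L s : (m <= L)%nat ->
  binom_power_sum m s = sum_f_R0 (fun i => rpow (binomR m i) s) L.
Proof.
  intros HmL. unfold binom_power_sum.
  rewrite (sum_tail_zero _ m L) by (intros; rewrite ?binomR_small, ?rpow_0; auto).
  apply sum_eq. intros i Hi.
  rewrite C_binomR, rpow_of_pos by (try apply binomR_pos; exact Hi). reflexivity.
Qed.

Lemma sum_Rpower_C_conv m n r :
  sum_f_R0 (fun l => Rpower (C (m + n) l) r) (m + n)
  = sum_f_R0 (fun l => rpow (conv (binomR m) (binomR n) l) r) (m + n).
Proof.
  apply sum_eq. intros l Hl.
  rewrite C_binomR, binomR_Vandermonde, rpow_of_pos by
    (try rewrite <- binomR_Vandermonde; try apply binomR_pos; exact Hl).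
  reflexivity.
Qed.

Theorem mainTheorem12 (m n : nat) (p q r : R)
  (Hmn : Z.modulo (Z.of_nat m - Z.of_nat n) 2 = 1%Z)
  (Hp : 1 <= p) (Hq : 1 <= q) (Hr : 1 <= r)
  (Hpqr : 1 / r = 1 / p + 1 / q - 1) :
  let N := (m + n)%nat in
  let k := ((N - 1) / 2)%nat in
  Rpower (2 / (r + 1) + Rpower (C N k) r + lhs_sum N k r) (1 / r)
  <= Rpower (binom_power_sum m q) (1 / q) * Rpower (binom_power_sum n p) (1 / p).
Proof.
  intros N k.
  assert (HN : N = S (2 * k)) by exact (odd_sum_of_odd_difference m n Hmn).
  eapply Rle_trans.
  { apply Rle_Rpower_l; [left; apply Rdiv_lt_0_compat; lra|].
    split; [apply lhs_pos, Hr | exact (lhs_le_sum_Rpower_C N k r HN Hr)]. }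
  rewrite (binom_power_sum_eq m (m + n)), (binom_power_sum_eq n (m + n)) by lia.
  unfold N. rewrite sum_Rpower_C_conv.
  apply young_conv_inequality; auto using binomR_pos; try lra; intros; apply pos_INR.
Qed.
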